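(* Let $(K,\mathcal O,k)$ be a $p$-modular system with $\mathcal O$ complete, let $\pi$ generate the maximal ideal of $\mathcal O$, and let $\Lambda$ be an $\mathcal O$-order in a separable $K$-algebra. For every $s\geq d(\Lambda)$, the image of the canonical map $\operatorname{Aut}_{\mathcal O}(\Lambda)\to\operatorname{Aut}_{\mathcal O}(\Lambda/\pi^{s+1}\Lambda)$ equals the image of the canonical map $\operatorname{Aut}_{\mathcal O}(\Lambda/\pi^{2s+1}\Lambda)\to\operatorname{Aut}_{\mathcal O}(\Lambda/\pi^{s+1}\Lambda)$.
   Context: A $p$-modular system $(K,\mathcal O,k)$ consists of a discrete valuation ring $\mathcal O$ of characteristic zero with fraction field $K$ and residue field $k$ of characteristic $p>0$. An $\mathcal O$-order in a separable $K$-algebra is an $\mathcal O$-algebra, free and finitely generated as an $\mathcal O$-module, whose scalar extension to $K$ is separable. The depth $d(\Lambda)$ is defined by $\pi^{d(\Lambda)}\mathcal O=I(\Lambda)$, where $I(\Lambda)$ is the (nonzero) ideal of elements of $\mathcal O$ annihilating the Hochschild cohomology $H^1(\Lambda,T)$ for all $\Lambda$-$\Lambda$-bimodules $T$. *)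

From HB Require Import structures.
From mathcomp Require Import all_boot all_order all_algebra.
From mathcomp Require Import fraction.
Set Implicit Arguments. Unset Strict Implicit. Unset Printing Implicit Defensive.
Import Order.TTheory GRing.Theory Num.Theory.
Local Open Scope ring_scope.

Definition pdvd (O : idomainType) (pi : O) (m : nat) (x : O) : Prop :=
  exists c : O, x = pi ^+ m * c.

Definition dvr_uniformizer (O : idomainType) (pi : O) : Prop :=
  [/\ pi != 0, pi \isn't a GRing.unit &
      forall x : O, x != 0 -> exists (u : O) (m : nat),
          u \is a GRing.unit /\ x = u * pi ^+ m].

(* (K, O, k) is a p-modular system, K = Frac O, k = O / pi O:
   O is a DVR of characteristic 0 whose residue field has characteristic p *)
Definition pmodular_system (p : nat) (O : idomainType) (pi : O) : Prop :=
  [/\ dvr_uniformizer pi,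
      (forall m : nat, (0 < m)%N -> (m%:R : O) != 0),
      prime p &
      pdvd pi 1 (p%:R)].

Definition pi_complete (O : idomainType) (pi : O) : Prop :=
  forall a : nat -> O,
    (forall N : nat, exists M : nat, forall i j : nat,
        (M <= i)%N -> (M <= j)%N -> pdvd pi N (a i - a j)) ->
    exists l : O, forall N : nat, exists M : nat, forall i : nat,
        (M <= i)%N -> pdvd pi N (l - a i).

Definition is_basis (O : idomainType) (Lam : algType O) (n : nat)
  (b : 'I_n -> Lam) : Prop :=
  forall x : Lam, exists! c : 'I_n -> O, x = \sum_(i < n) c i *: b i.

(* Separability of a finite-dimensional K-algebra A given by a K-basis with
   structure constants cst (b_i b_j = sum_k cst i j k b_k) and unit
   coordinates u (1 = sum_k u k b_k): existence of a separability idempotent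
   e = sum_{i,j} e i j (b_i (x) b_j) in A (x)_K A^op, i.e. mu(e) = 1 and
   a e = e a for all a in A (A projective as A (x) A^op-module). *)
Definition separability_idempotent (K : fieldType) (n : nat)
  (cst : 'I_n -> 'I_n -> 'I_n -> K) (u : 'I_n -> K) (e : 'I_n -> 'I_n -> K)
  : Prop :=
  (forall k : 'I_n, \sum_(i < n) \sum_(j < n) e i j * cst i j k = u k) /\
  (forall l k m : 'I_n,
      \sum_(i < n) e i m * cst l i k = \sum_(j < n) e k j * cst j l m).

(* K (x)_O Lam
   has the K-basis 1 (x) b_i with the same structure constants as Lam. *)
Definition is_order (O : idomainType) (Lam : algType O) : Prop :=
  exists (n : nat) (b : 'I_n -> Lam),
    is_basis b /\
    forall (cst : 'I_n -> 'I_n -> 'I_n -> O) (u : 'I_n -> O),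
      (forall i j : 'I_n, b i * b j = \sum_(k < n) cst i j k *: b k) ->
      1 = \sum_(k < n) u k *: b k ->
      exists e : 'I_n -> 'I_n -> {fraction O},
        separability_idempotent (fun i j k => tofrac (cst i j k))
                                (fun k => tofrac (u k)) e.

Definition bimodule (O : idomainType) (Lam : algType O) (T : zmodType)
  (la : Lam -> T -> T) (ra : T -> Lam -> T) : Prop :=
  (forall x y t, la (x + y) t = la x t + la y t) /\
  (forall x t t', la x (t + t') = la x t + la x t') /\
  (forall x y t, ra t (x + y) = ra t x + ra t y) /\
  (forall x t t', ra (t + t') x = ra t x + ra t' x) /\
  (forall t, la 1 t = t /\ ra t 1 = t) /\
  (forall x y t, la (x * y) t = la x (la y t) /\ ra t (x * y) = ra (ra t x) y) /\
  (forall x y t, la x (ra t y) = ra (la x t) y) /\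
  (forall (a : O) t, la (a *: 1) t = ra t (a *: 1)).

Definition derivation (O : idomainType) (Lam : algType O) (T : zmodType)
  (la : Lam -> T -> T) (ra : T -> Lam -> T) (delta : Lam -> T) : Prop :=
  [/\ (forall x y, delta (x + y) = delta x + delta y),
      (forall (a : O) x, delta (a *: x) = la (a *: 1) (delta x)) &
      (forall x y, delta (x * y) = ra (delta x) y + la x (delta y))].

Definition inner_derivation (O : idomainType) (Lam : algType O) (T : zmodType)
  (la : Lam -> T -> T) (ra : T -> Lam -> T) (delta : Lam -> T) : Prop :=
  exists t : T, forall x, delta x = la x t - ra t x.

(* lambda \in I(Lam): lambda annihilates H^1(Lam, T) = Der / Inn for every
   Lam-Lam-bimodule T, i.e. lambda * delta is inner for every derivation. *)
Definition annihilates_H1 (O : idomainType) (Lam : algType O) (lambda : O)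
  : Prop :=
  forall (T : zmodType) (la : Lam -> T -> T) (ra : T -> Lam -> T),
    bimodule la ra ->
    forall delta : Lam -> T, derivation la ra delta ->
      inner_derivation la ra (fun x => la (lambda *: 1) (delta x)).

Definition is_depth (O : idomainType) (pi : O) (Lam : algType O) (d : nat)
  : Prop :=
  forall lambda : O, annihilates_H1 Lam lambda <-> pdvd pi d lambda.

Definition congr (O : idomainType) (Lam : algType O) (pi : O) (m : nat)
  (x y : Lam) : Prop :=
  exists z : Lam, x - y = pi ^+ m *: z.

Definition is_aut (O : idomainType) (Lam : algType O) (f : Lam -> Lam) : Prop :=
  [/\ (forall x y, f (x + y) = f x + f y),
      (forall (a : O) x, f (a *: x) = a *: f x),
      (forall x y, f (x * y) = f x * f y),
      f 1 = 1 & bijective f].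

(* O-algebra automorphisms of Lam / pi^m Lam, represented (setoid-style) by
   maps Lam -> Lam compatible with congruence mod pi^m; two such maps
   represent the same automorphism iff they agree pointwise mod pi^m. *)
Definition is_aut_mod (O : idomainType) (Lam : algType O) (pi : O) (m : nat)
  (f : Lam -> Lam) : Prop :=
  (forall x y, congr pi m x y -> congr pi m (f x) (f y)) /\
  (forall x y, congr pi m (f (x + y)) (f x + f y)) /\
  (forall (a : O) x, congr pi m (f (a *: x)) (a *: f x)) /\
  (forall x y, congr pi m (f (x * y)) (f x * f y)) /\
  congr pi m (f 1) 1 /\
  (forall x y, congr pi m (f x) (f y) -> congr pi m x y) /\
  (forall y, exists x, congr pi m (f x) y).

(* Since pi^d annihilates H^1(Lam, -), it annihilates in particular the derivation
   x |-> x (1 (x) 1) - (1 (x) 1) x into the bimodule ker (Lam (x) Lam -> Lam); this yields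
   E in Lam (x) Lam commuting with Lam and multiplying out to pi^d.  If a linear map f is
   multiplicative modulo pi^m with m > 2d, its defect c(x, y) = (f x f y - f (x y)) / pi^m is
   a Hochschild 2-cocycle, and contracting c with E gives g such that f - pi^(m-d) g agrees
   with f modulo pi^(m-d) and is multiplicative modulo pi^(2(m-d)).  Starting from a linear
   lift of an automorphism of Lam / pi^(2s+1) Lam, these Newton steps converge pi-adically
   to an algebra endomorphism of Lam congruent to it modulo pi^(s+1); it is bijective since
   it is surjective modulo pi, so that its matrix has a unit determinant. *)

From HB Require Import structures.
From mathcomp Require Import all_boot all_algebra.
From mathcomp Require Import zify.
From Stdlib Require Import ClassicalEpsilon.
Set Implicit Arguments. Unset Strict Implicit. Unset Printing Implicit Defensive.
Import GRing.Theory.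
Local Open Scope ring_scope.

Lemma subrACA (V : zmodType) (a b c d : V) : (a - b) - (c - d) = (a - c) - (b - d).
Proof. by rewrite !opprB addrACA [RHS]addrACA [- b + _]addrC. Qed.

Section PiAdicDivisibility.
Variables (O : idomainType) (pi : O) (Lam : algType O).
Implicit Types (x y z : Lam) (m k : nat).

Definition dvdpi m x := exists z, x = pi ^+ m *: z.

Lemma dvdpi0 m : dvdpi m 0. Proof. by exists 0; rewrite scaler0. Qed.

Lemma dvdpi_scale m z : dvdpi m (pi ^+ m *: z). Proof. by exists z. Qed.

Lemma dvdpiD m x y : dvdpi m x -> dvdpi m y -> dvdpi m (x + y).
Proof. by move=> [z ->] [w ->]; exists (z + w); rewrite scalerDr. Qed.

Lemma dvdpiN m x : dvdpi m x -> dvdpi m (- x).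
Proof. by move=> [z ->]; exists (- z); rewrite scalerN. Qed.

Lemma dvdpiB m x y : dvdpi m x -> dvdpi m y -> dvdpi m (x - y).
Proof. by move=> dx dy; apply/dvdpiD/dvdpiN. Qed.

Lemma dvdpiZ m a x : dvdpi m x -> dvdpi m (a *: x).
Proof. by move=> [z ->]; exists (a *: z); rewrite !scalerA mulrC. Qed.

Lemma dvdpiMl m x y : dvdpi m x -> dvdpi m (y * x).
Proof. by move=> [z ->]; exists (y * z); rewrite scalerAr. Qed.

Lemma dvdpiMr m x y : dvdpi m x -> dvdpi m (x * y).
Proof. by move=> [z ->]; exists (z * y); rewrite scalerAl. Qed.

Lemma dvdpiM i j x y : dvdpi i x -> dvdpi j y -> dvdpi (i + j) (x * y).
Proof.
move=> [z ->] [w ->]; exists (z * w).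
by rewrite -scalerAl -scalerAr scalerA -exprD.
Qed.

Lemma dvdpiXZ j k x : dvdpi k x -> dvdpi (j + k) (pi ^+ j *: x).
Proof. by move=> [z ->]; exists z; rewrite scalerA -exprD. Qed.

Lemma dvdpiW k m x : (k <= m)%N -> dvdpi m x -> dvdpi k x.
Proof.
move=> le_km [z ->]; exists (pi ^+ (m - k) *: z).
by rewrite scalerA -exprD subnKC.
Qed.

Lemma dvdpi_sum m (I : finType) (F : I -> Lam) :
  (forall i, dvdpi m (F i)) -> dvdpi m (\sum_i F i).
Proof. by move=> dF; apply: (big_ind (dvdpi m)) => //; [apply: dvdpi0 | apply: dvdpiD]. Qed.

Definition pi_cauchy (v : nat -> Lam) := forall N, exists M, forall i j,
  (M <= i)%N -> (M <= j)%N -> congr pi N (v i) (v j).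

Definition pi_limit (v : nat -> Lam) l := forall N, exists M, forall i,
  (M <= i)%N -> congr pi N l (v i).

Definition divpi m x := epsilon (inhabits 0) (fun z => x = pi ^+ m *: z).

Lemma divpiK m x : dvdpi m x -> x = pi ^+ m *: divpi m x.
Proof. exact: (epsilon_spec _ (fun z => x = pi ^+ m *: z)). Qed.

Lemma congr_refl m x : congr pi m x x.
Proof. by rewrite /congr subrr; apply: dvdpi0. Qed.

Lemma congr_eq m x y : x = y -> congr pi m x y.
Proof. by move=> ->; apply: congr_refl. Qed.

Lemma congr_sym m x y : congr pi m x y -> congr pi m y x.
Proof. by move=> /dvdpiN; rewrite opprB. Qed.

Lemma congr_trans m x y z : congr pi m x y -> congr pi m y z -> congr pi m x z.
Proof. by move=> /dvdpiD h /h; rewrite subrKA. Qed.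

Lemma congrD m x y x' y' :
  congr pi m x x' -> congr pi m y y' -> congr pi m (x + y) (x' + y').
Proof. by move=> /dvdpiD h /h; rewrite /congr opprD addrACA. Qed.

Lemma congrN m x x' : congr pi m x x' -> congr pi m (- x) (- x').
Proof. by move=> /dvdpiN; rewrite /congr opprB opprK addrC. Qed.

Lemma congrB m x y x' y' :
  congr pi m x x' -> congr pi m y y' -> congr pi m (x - y) (x' - y').
Proof. by move=> cx /congrN; apply: congrD. Qed.

Lemma congrZ m a x x' : congr pi m x x' -> congr pi m (a *: x) (a *: x').
Proof. by move=> /(dvdpiZ a); rewrite /congr scalerBr. Qed.

Lemma congrM m x y x' y' :
  congr pi m x x' -> congr pi m y y' -> congr pi m (x * y) (x' * y').
Proof.
move=> /(dvdpiMr y) cx /(dvdpiMl x') cy; have := dvdpiD cx cy.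
by rewrite /congr mulrBl mulrBr subrKA.
Qed.

Lemma congrW k m x y : (k <= m)%N -> congr pi m x y -> congr pi k x y.
Proof. exact: dvdpiW. Qed.

End PiAdicDivisibility.

Section Uniformizer.
Variables (O : idomainType) (pi : O).
Hypothesis pi_unif : dvr_uniformizer pi.

Lemma pdvd_forall_eq0 a : (forall N, pdvd pi N a) -> a = 0.
Proof.
move=> dvd_a; apply/eqP/negPn/negP => a_neq0.
have [pi_neq0 pi_nonunit /(_ a a_neq0) [u [m [u_unit def_a]]]] := pi_unif.
have [c def_c] := dvd_a m.+1.
have : pi ^+ m * u = pi ^+ m * (pi * c) by rewrite mulrC -def_a def_c exprSr mulrA.
move/(mulfI (expf_neq0 m pi_neq0)) => def_u.
by move: u_unit; rewrite def_u unitrM (negbTE pi_nonunit).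
Qed.

Lemma unit_of_pdvd_subr1 x : pdvd pi 1 (x - 1) -> x \is a GRing.unit.
Proof.
move=> [c def_c]; have [_ pi_nonunit factor] := pi_unif.
have [x0 | x_neq0] := eqVneq x 0.
  move: def_c; rewrite x0 sub0r expr1 => /(congr1 -%R); rewrite opprK => def1.
  by move: (unitr1 O); rewrite def1 -mulrN unitrM (negbTE pi_nonunit).
have [u [[|m] [u_unit def_x]]] := factor x x_neq0; first by rewrite def_x mulr1.
have def1 : 1 = pi * (u * pi ^+ m - c).
  rewrite expr1 in def_c.
  by rewrite mulrBr -def_c mulrCA -exprS -def_x opprB addrC subrK.
by move: (unitr1 O); rewrite def1 unitrM (negbTE pi_nonunit).
Qed.

End Uniformizer.

Section LinearMaps.
Variables (O : idomainType) (Lam : algType O).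
Implicit Types (x y : Lam) (f : Lam -> Lam).

Definition is_linear f :=
  (forall x y, f (x + y) = f x + f y) /\ (forall a x, f (a *: x) = a *: f x).

Lemma is_linear0 f : is_linear f -> f 0 = 0.
Proof. by move=> [_ fZ]; rewrite -(scale0r (0 : Lam)) fZ !scale0r. Qed.

Lemma is_linearB f x y : is_linear f -> f (x - y) = f x - f y.
Proof. by move=> [fD fZ]; rewrite fD -scaleN1r fZ scaleN1r. Qed.

Lemma is_linear_sum f (I : finType) (F : I -> Lam) :
  is_linear f -> f (\sum_i F i) = \sum_i f (F i).
Proof.
move=> f_lin; apply: (big_rec2 (fun u v => f u = v)); first exact: is_linear0.
by move=> j u v _ <-; rewrite f_lin.1.
Qed.

End LinearMaps.

Section Coordinates.
Variables (O : idomainType) (Lam : algType O) (n : nat) (b : 'I_n -> Lam).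
Hypothesis b_basis : is_basis b.
Implicit Types (x y : Lam) (f : Lam -> Lam).

Definition bcoord x : 'I_n -> O :=
  epsilon (inhabits (fun=> 0)) (fun c => x = \sum_i c i *: b i).

Lemma bcoordK x : x = \sum_i bcoord x i *: b i.
Proof.
have [c [def_x _]] := b_basis x.
by apply: (epsilon_spec _ (fun c => x = \sum_i c i *: b i)); exists c.
Qed.

Lemma bcoord_uniq x c : x = \sum_i c i *: b i -> bcoord x = c.
Proof.
move=> def_x; have [c' [_ uniq_c']] := b_basis x.
by rewrite -(uniq_c' c def_x) -(uniq_c' _ (bcoordK x)).
Qed.

Lemma bcoord_sum (I : finType) (c : I -> O) (v : I -> Lam) i :
  bcoord (\sum_j c j *: v j) i = \sum_j c j * bcoord (v j) i.
Proof.
suff -> : bcoord (\sum_j c j *: v j) = fun i => \sum_j c j * bcoord (v j) i by [].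
apply: bcoord_uniq; under [RHS]eq_bigr do rewrite scaler_suml.
rewrite [RHS]exchange_big /=; apply: eq_bigr => j _.
by rewrite {1}(bcoordK (v j)) scaler_sumr; apply: eq_bigr => k _; rewrite scalerA.
Qed.

Lemma bcoordZ a x i : bcoord (a *: x) i = a * bcoord x i.
Proof.
suff -> : bcoord (a *: x) = fun i => a * bcoord x i by [].
by apply: bcoord_uniq; rewrite {1}(bcoordK x) scaler_sumr; apply: eq_bigr => j _; rewrite scalerA.
Qed.

Lemma bcoordD x y i : bcoord (x + y) i = bcoord x i + bcoord y i.
Proof.
suff -> : bcoord (x + y) = fun i => bcoord x i + bcoord y i by [].
apply: bcoord_uniq; rewrite {1}(bcoordK x) {1}(bcoordK y) -big_split.
by apply: eq_bigr => j _; rewrite scalerDl.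
Qed.

Lemma bcoordB x y i : bcoord (x - y) i = bcoord x i - bcoord y i.
Proof. by rewrite bcoordD -scaleN1r bcoordZ mulN1r. Qed.

Lemma bcoord0 i : bcoord 0 i = 0.
Proof. by rewrite -(scale0r (0 : Lam)) bcoordZ mul0r. Qed.

Lemma bcoord_basis j i : bcoord (b j) i = (i == j)%:R.
Proof.
suff -> : bcoord (b j) = fun i => (i == j)%:R by [].
apply: bcoord_uniq; rewrite (bigD1 j) //= eqxx scale1r big1 ?addr0 //.
by move=> k /negbTE ->; rewrite scale0r.
Qed.

Lemma bcoord_inj x y : (forall i, bcoord x i = bcoord y i) -> x = y.
Proof.
by move=> eq_xy; rewrite (bcoordK x) (bcoordK y); apply: eq_bigr => i _; rewrite eq_xy.
Qed.

Lemma bcoord_comb (c : 'I_n -> O) i : bcoord (\sum_j c j *: b j) i = c i.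
Proof.
rewrite bcoord_sum (bigD1 i) //= bcoord_basis eqxx mulr1 big1 ?addr0 // => j.
by move/negbTE; rewrite bcoord_basis eq_sym => ->; rewrite mulr0.
Qed.

Variable pi : O.

Lemma dvdpi_bcoord m x : dvdpi pi m x <-> forall i, pdvd pi m (bcoord x i).
Proof.
split=> [[z ->] i | dvd_x]; first by exists (bcoord z i); rewrite bcoordZ.
pose q i := epsilon (inhabits 0) (fun c => bcoord x i = pi ^+ m * c).
exists (\sum_i q i *: b i); rewrite {1}(bcoordK x) scaler_sumr.
apply: eq_bigr => i _; rewrite scalerA; congr (_ *: _).
by apply: (epsilon_spec _ (fun c => bcoord x i = pi ^+ m * c)); apply: dvd_x.
Qed.

Hypothesis pi_unif : dvr_uniformizer pi.

Lemma scale_piX_inj m : injective (fun z : Lam => pi ^+ m *: z).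
Proof.
move=> z z' /(congr1 (bcoord^~ _)) eq_z; apply: bcoord_inj => i.
move: (eq_z i) => /=; rewrite !bcoordZ; apply: mulfI.
by case: pi_unif => pi_neq0 _ _; apply: expf_neq0.
Qed.

Lemma congr_forall_eq x y : (forall N, congr pi N x y) -> x = y.
Proof.
move=> cxy; apply/eqP; rewrite -subr_eq0; apply/eqP/bcoord_inj => i.
rewrite bcoord0; apply: (pdvd_forall_eq0 pi_unif) => N.
exact: (dvdpi_bcoord N (x - y)).1 (cxy N) i.
Qed.

Lemma is_linear_bcoordE f x : is_linear f -> f x = \sum_j bcoord x j *: f (b j).
Proof.
by move=> f_lin; rewrite {1}(bcoordK x) is_linear_sum //; apply: eq_bigr => j _; rewrite f_lin.2.
Qed.

Lemma is_linear_comb (v : 'I_n -> Lam) : is_linear (fun x => \sum_j bcoord x j *: v j).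
Proof.
split=> [x y | a x].
  by rewrite -big_split; apply: eq_bigr => j _; rewrite bcoordD scalerDl.
by rewrite scaler_sumr; apply: eq_bigr => j _; rewrite bcoordZ scalerA.
Qed.

Lemma free_pi_complete (v : nat -> Lam) :
  pi_complete pi -> pi_cauchy pi v -> exists l, pi_limit pi v l.
Proof.
move=> O_complete v_cauchy.
have lim_coord k : exists l : O, forall N, exists M, forall i, (M <= i)%N ->
    pdvd pi N (l - bcoord (v i) k).
  apply: O_complete => N; have [M v_M] := v_cauchy N; exists M => i j le_Mi le_Mj.
  by have /dvdpi_bcoord/(_ k) := v_M i j le_Mi le_Mj; rewrite bcoordB.
pose l k := epsilon (inhabits 0) (fun l => forall N, exists M, forall i, (M <= i)%N ->
    pdvd pi N (l - bcoord (v i) k)).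
have l_lim k := epsilon_spec (inhabits 0) _ (lim_coord k).
exists (\sum_k l k *: b k) => N; have [M v_M] := v_cauchy N.
exists M => i le_Mi; apply/dvdpi_bcoord => k; rewrite bcoordB bcoord_comb.
have [M' l_M'] := l_lim k N; pose j := maxn M' i.
have [c1 def_c1] := l_M' j (leq_maxl _ _).
have /dvdpi_bcoord/(_ k) := v_M j i (leq_trans le_Mi (leq_maxr _ _)) le_Mi.
rewrite bcoordB => -[c2 def_c2]; exists (c1 + c2).
by rewrite mulrDr -def_c1 -def_c2 subrKA.
Qed.

End Coordinates.

Section Contraction.
Variables (O : idomainType) (Lam : algType O) (n : nat).
Implicit Types (t : 'M[O]_n) (F G : 'I_n -> 'I_n -> Lam).

Definition contract t F : Lam := \sum_i \sum_j t i j *: F i j.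

Lemma eq_contract t F G : (forall i j, F i j = G i j) -> contract t F = contract t G.
Proof. by move=> eq_FG; apply: eq_bigr => i _; apply: eq_bigr => j _; rewrite eq_FG. Qed.

Lemma contractD t F G : contract t (fun i j => F i j + G i j) = contract t F + contract t G.
Proof.
rewrite /contract -big_split; apply: eq_bigr => i _; rewrite -big_split.
by apply: eq_bigr => j _; rewrite scalerDr.
Qed.

Lemma contractZ t a F : contract t (fun i j => a *: F i j) = a *: contract t F.
Proof.
rewrite /contract scaler_sumr; apply: eq_bigr => i _; rewrite scaler_sumr.
by apply: eq_bigr => j _; rewrite !scalerA mulrC.
Qed.

Lemma contractB t F G : contract t (fun i j => F i j - G i j) = contract t F - contract t G.
Proof.
rewrite contractD -scaleN1r -contractZ.
by congr (_ + _); apply: eq_contract => i j; rewrite scaleN1r.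
Qed.

Lemma contractMl t u F : contract t (fun i j => u * F i j) = u * contract t F.
Proof.
rewrite /contract mulr_sumr; apply: eq_bigr => i _; rewrite mulr_sumr.
by apply: eq_bigr => j _; rewrite scalerAr.
Qed.

Lemma contractMr t F u : contract t (fun i j => F i j * u) = contract t F * u.
Proof.
rewrite /contract mulr_suml; apply: eq_bigr => i _; rewrite mulr_suml.
by apply: eq_bigr => j _; rewrite scalerAl.
Qed.

Lemma contractDl t t' F : contract (t + t') F = contract t F + contract t' F.
Proof.
rewrite /contract -big_split; apply: eq_bigr => i _; rewrite -big_split.
by apply: eq_bigr => j _; rewrite mxE scalerDl.
Qed.

Lemma contractZl a t F : contract (a *: t) F = a *: contract t F.
Proof.
rewrite /contract scaler_sumr; apply: eq_bigr => i _; rewrite scaler_sumr.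
by apply: eq_bigr => j _; rewrite mxE scalerA.
Qed.

Lemma contractBl t t' F : contract (t - t') F = contract t F - contract t' F.
Proof. by rewrite contractDl -scaleN1r contractZl scaleN1r. Qed.

Lemma is_linear_contract f t F :
  is_linear f -> f (contract t F) = contract t (fun i j => f (F i j)).
Proof.
move=> f_lin; rewrite /contract is_linear_sum //; apply: eq_bigr => i _.
by rewrite is_linear_sum //; apply: eq_bigr => j _; rewrite f_lin.2.
Qed.

Variable pi : O.

Lemma dvdpi_contract m t F : (forall i j, dvdpi pi m (F i j)) -> dvdpi pi m (contract t F).
Proof. by move=> dF; do 2![apply: dvdpi_sum => ?]; apply/dvdpiZ/dF. Qed.

Lemma congr_contract m t F G :
  (forall i j, congr pi m (F i j) (G i j)) -> congr pi m (contract t F) (contract t G).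
Proof. by move=> cFG; rewrite /congr -contractB; apply: dvdpi_contract. Qed.

End Contraction.

(* A matrix t : 'M_n stands for the tensor \sum_(i, j) t i j (b i (x) b j) of Lam (x)_O Lam;
   lmul_mx x and rmul_mx y act on it by left multiplication by x and right multiplication
   by y, and mult is the multiplication map Lam (x)_O Lam -> Lam. *)
Section SeparabilityElement.
Variables (O : idomainType) (Lam : algType O) (n : nat) (b : 'I_n -> Lam).
Hypothesis b_basis : is_basis b.
Local Notation bcoord := (bcoord b).
Implicit Types (x y : Lam) (t : 'M[O]_n).

Definition lmul_mx x : 'M[O]_n := \matrix_(k, i) bcoord (x * b i) k.
Definition rmul_mx y : 'M[O]_n := \matrix_(j, l) bcoord (b j * y) l.
Definition mult t : Lam := contract t (fun i j => b i * b j).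

Lemma contract_lmul x t (beta : Lam -> 'I_n -> Lam) : (forall j, is_linear (beta^~ j)) ->
  contract (lmul_mx x *m t) (fun i j => beta (b i) j) = contract t (fun i j => beta (x * b i) j).
Proof.
move=> beta_lin; rewrite /contract.
transitivity (\sum_k \sum_j \sum_i (lmul_mx x k i * t i j) *: beta (b k) j).
  by apply: eq_bigr => k _; apply: eq_bigr => j _; rewrite mxE scaler_suml.
rewrite exchange_big /=.
transitivity (\sum_j \sum_i \sum_k (lmul_mx x k i * t i j) *: beta (b k) j).
  by apply: eq_bigr => j _; rewrite exchange_big.
rewrite exchange_big /=; apply: eq_bigr => i _; apply: eq_bigr => j _.
rewrite (is_linear_bcoordE b_basis (x * b i) (beta_lin j)) scaler_sumr.
by apply: eq_bigr => k _; rewrite mxE scalerA mulrC.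
Qed.

Lemma contract_rmul y t (beta : 'I_n -> Lam -> Lam) : (forall i, is_linear (beta i)) ->
  contract (t *m rmul_mx y) (fun i j => beta i (b j)) = contract t (fun i j => beta i (b j * y)).
Proof.
move=> beta_lin; rewrite /contract; apply: eq_bigr => i _.
transitivity (\sum_k \sum_j (t i j * rmul_mx y j k) *: beta i (b k)).
  by apply: eq_bigr => k _; rewrite mxE scaler_suml.
rewrite exchange_big /=; apply: eq_bigr => j _.
rewrite (is_linear_bcoordE b_basis (b j * y) (beta_lin i)) scaler_sumr.
by apply: eq_bigr => k _; rewrite mxE scalerA.
Qed.

Lemma mult_lmul x t : mult (lmul_mx x *m t) = x * mult t.
Proof.
rewrite /mult (@contract_lmul x t (fun u j => u * b j)); last first.
  by move=> j; split=> [u v | a u]; rewrite ?mulrDl ?scalerAl.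
by rewrite -contractMl; apply: eq_contract => i j; rewrite mulrA.
Qed.

Lemma mult_rmul y t : mult (t *m rmul_mx y) = mult t * y.
Proof.
rewrite /mult (@contract_rmul y t (fun i v => b i * v)); last first.
  by move=> i; split=> [u v | a u]; rewrite ?mulrDr ?scalerAr.
by rewrite -contractMr; apply: eq_contract => i j; rewrite mulrA.
Qed.

Lemma lmul_mxM x y : lmul_mx (x * y) = lmul_mx x *m lmul_mx y.
Proof.
apply/matrixP => k i; rewrite !mxE -mulrA {1}(bcoordK b_basis (y * b i)) mulr_sumr.
under eq_bigr do rewrite -scalerAr.
by rewrite (bcoord_sum b_basis); apply: eq_bigr => j _; rewrite !mxE mulrC.
Qed.

Lemma rmul_mxM x y : rmul_mx (x * y) = rmul_mx x *m rmul_mx y.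
Proof.
apply/matrixP => j l; rewrite !mxE mulrA {1}(bcoordK b_basis (b j * x)) mulr_suml.
under eq_bigr do rewrite -scalerAl.
by rewrite (bcoord_sum b_basis); apply: eq_bigr => k _; rewrite !mxE.
Qed.

Lemma lmul_mx1 : lmul_mx 1 = 1%:M.
Proof. by apply/matrixP => k i; rewrite !mxE mul1r (bcoord_basis b_basis). Qed.

Lemma rmul_mx1 : rmul_mx 1 = 1%:M.
Proof. by apply/matrixP => j l; rewrite !mxE mulr1 (bcoord_basis b_basis) eq_sym. Qed.

Lemma lmul_mxD x y : lmul_mx (x + y) = lmul_mx x + lmul_mx y.
Proof. by apply/matrixP => k i; rewrite !mxE mulrDl (bcoordD b_basis). Qed.

Lemma rmul_mxD x y : rmul_mx (x + y) = rmul_mx x + rmul_mx y.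
Proof. by apply/matrixP => j l; rewrite !mxE mulrDr (bcoordD b_basis). Qed.

Lemma lmul_mxZ a x : lmul_mx (a *: x) = a *: lmul_mx x.
Proof. by apply/matrixP => k i; rewrite !mxE -scalerAl (bcoordZ b_basis). Qed.

Lemma rmul_mxZ a x : rmul_mx (a *: x) = a *: rmul_mx x.
Proof. by apply/matrixP => j l; rewrite !mxE -scalerAr (bcoordZ b_basis). Qed.

Lemma lmul_mx_scalar a : lmul_mx (a *: 1) = a%:M.
Proof. by rewrite lmul_mxZ lmul_mx1 scalemx1. Qed.

Lemma rmul_mx_scalar a : rmul_mx (a *: 1) = a%:M.
Proof. by rewrite rmul_mxZ rmul_mx1 scalemx1. Qed.

Definition one_tensor : 'M[O]_n := \matrix_(i, j) (bcoord 1 i * bcoord 1 j).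

Lemma mult_one_tensor : mult one_tensor = 1.
Proof.
have def1 : 1 = (\sum_i bcoord 1 i *: b i) * (\sum_j bcoord 1 j *: b j).
  by rewrite -!(bcoordK b_basis) mulr1.
rewrite [RHS]def1 mulr_suml; apply: eq_bigr => i _; rewrite mulr_sumr; apply: eq_bigr => j _.
by rewrite mxE -scalerAl -scalerAr scalerA mulrC.
Qed.

Definition ker_mult : {pred 'M[O]_n} := [pred t | mult t == 0].

Lemma ker_multE t : (t \in ker_mult) = (mult t == 0). Proof. by []. Qed.

Fact ker_mult_zmod_closed : zmod_closed ker_mult.
Proof.
split=> [|t t']; rewrite !ker_multE /mult ?contractBl.
  by rewrite /contract big1 // => i _; rewrite big1 // => j _; rewrite mxE scale0r.
by move=> /eqP -> /eqP ->; rewrite subrr.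
Qed.
HB.instance Definition _ := GRing.isZmodClosed.Build _ ker_mult ker_mult_zmod_closed.

Inductive ker_tensor : predArgType := KerTensor t & t \in ker_mult.
Definition ker_val w := let: KerTensor t _ := w in t.
HB.instance Definition _ := [isSub for ker_val].
HB.instance Definition _ := [Choice of ker_tensor by <:].
HB.instance Definition _ := [SubChoice_isSubZmodule of ker_tensor by <:].

Lemma mult_ker_val w : mult (ker_val w) = 0.
Proof. by apply/eqP; rewrite -ker_multE; apply: (valP w). Qed.

Fact ker_lmul_subproof x w : lmul_mx x *m ker_val w \in ker_mult.
Proof. by rewrite ker_multE mult_lmul mult_ker_val mulr0. Qed.

Fact ker_rmul_subproof w y : ker_val w *m rmul_mx y \in ker_mult.
Proof. by rewrite ker_multE mult_rmul mult_ker_val mul0r. Qed.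

Fact commutator_one_subproof x :
  lmul_mx x *m one_tensor - one_tensor *m rmul_mx x \in ker_mult.
Proof.
rewrite ker_multE /mult contractBl -!/(mult _) mult_lmul mult_rmul mult_one_tensor.
by rewrite mulr1 mul1r subrr.
Qed.

Definition ker_lmul x w := KerTensor (ker_lmul_subproof x w).
Definition ker_rmul w y := KerTensor (ker_rmul_subproof w y).
Definition commutator_one x := KerTensor (commutator_one_subproof x).

Lemma ker_tensor_bimodule : bimodule ker_lmul ker_rmul.
Proof.
split; first by move=> x y w; apply: val_inj; rewrite /= lmul_mxD mulmxDl.
split; first by move=> x w w'; apply: val_inj; rewrite /= mulmxDr.
split; first by move=> x y w; apply: val_inj; rewrite /= rmul_mxD mulmxDr.
split; first by move=> x w w'; apply: val_inj; rewrite /= mulmxDl.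
split; first by move=> w; split; apply: val_inj; rewrite /= ?lmul_mx1 ?rmul_mx1 ?mul1mx ?mulmx1.
split; first by move=> x y w; split; apply: val_inj; rewrite /= ?lmul_mxM ?rmul_mxM mulmxA.
split; first by move=> x y w; apply: val_inj; rewrite /= mulmxA.
move=> a w; apply: val_inj.
by rewrite /= lmul_mx_scalar rmul_mx_scalar mul_scalar_mx mul_mx_scalar.
Qed.

Lemma commutator_one_derivation : derivation ker_lmul ker_rmul commutator_one.
Proof.
split=> [x y | a x | x y]; apply: val_inj => /=.
- by rewrite lmul_mxD rmul_mxD mulmxDl mulmxDr opprD addrACA.
- by rewrite lmul_mxZ rmul_mxZ lmul_mx_scalar mul_scalar_mx -scalemxAl -scalemxAr scalerBr.
- rewrite lmul_mxM rmul_mxM mulmxBl mulmxBr !mulmxA.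
  by rewrite [RHS]addrC addrA subrK.
Qed.

Definition sep_element (lambda : O) (E : 'M[O]_n) :=
  mult E = lambda *: 1 /\ forall x, lmul_mx x *m E = E *m rmul_mx x.

(* E := lambda (1 (x) 1) - t, where t makes lambda times the derivation
   x |-> x (1 (x) 1) - (1 (x) 1) x of ker mult inner. *)
Lemma sep_element_of_annihilator lambda :
  annihilates_H1 Lam lambda -> exists E, sep_element lambda E.
Proof.
move=> ann; have [w def_w] := ann _ _ _ ker_tensor_bimodule _ commutator_one_derivation.
exists (lambda *: one_tensor - ker_val w); split.
  by rewrite /mult contractBl contractZl -!/(mult _) mult_one_tensor mult_ker_val subr0.
move=> x; have := congr1 ker_val (def_w x).
rewrite /= lmul_mx_scalar mul_scalar_mx mulmxBr mulmxBl -scalemxAl -scalemxAr => def_comm.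
move/eqP: def_comm; rewrite scalerBr subr_eq => /eqP ->.
by rewrite addrC addrA addKr addrC.
Qed.

Lemma sep_element_balanced lambda E x (beta : Lam -> Lam -> Lam) :
  sep_element lambda E ->
  (forall v, is_linear (beta^~ v)) -> (forall u, is_linear (beta u)) ->
  contract E (fun i j => beta (x * b i) (b j)) = contract E (fun i j => beta (b i) (b j * x)).
Proof.
move=> [_ E_comm] beta_linl beta_linr.
rewrite -(@contract_lmul x E (fun u j => beta u (b j))) // E_comm.
exact: (@contract_rmul x E (fun i v => beta (b i) v)).
Qed.

End SeparabilityElement.

Lemma mul_defect_perturb (O : idomainType) (Lam : algType O) (f g : Lam -> Lam) (a : O) x y :
  (f x - a *: g x) * (f y - a *: g y) - (f (x * y) - a *: g (x * y)) =
  (f x * f y - f (x * y)) - a *: (f x * g y + g x * f y - g (x * y)) + a *: (a *: (g x * g y)).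
Proof.
rewrite mulrBl !mulrBr -!scalerAl -!scalerAr scalerBr scalerDr opprB opprD !addrA.
set A := f x * f y; set B := a *: (f x * g y); set C := a *: (g x * f y).
set D := a *: (a *: _); set F := f (x * y); set G := a *: g (x * y).
rewrite opprK !opprD opprK !addrA.
rewrite [A - B + D - C]addrAC [A - B - C + D - F]addrAC [A - B - C - F + D + G]addrAC.
by rewrite [A - B - C - F]addrAC [A - B - F]addrAC.
Qed.

Section MultiplicativeModPi.
Variables (O : idomainType) (pi : O) (Lam : algType O).
Implicit Types (f : Lam -> Lam) (m : nat).

Definition multiplicative_mod m f := forall x y, congr pi m (f x * f y) (f (x * y)).

(* With e := f 1 - 1 we have e + e * e = 0 mod pi^m, so e = 0 mod pi^k improves to
   e = 0 mod pi^(k+1) as long as k < m. *)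
Lemma multiplicative_mod_map1 m f :
  (0 < m)%N -> congr pi 1 (f 1) 1 -> multiplicative_mod m f -> congr pi m (f 1) 1.
Proof.
move=> m_gt0 f1 f_mul; set e := f 1 - 1.
have def_f1 : f 1 = e + 1 by rewrite /e subrK.
have e_idem : dvdpi pi m (e + e * e).
  by have := f_mul 1 1; rewrite /congr mul1r def_f1 mulrDr mulr1 addrK mulrDl mul1r addrC.
suff : forall k, (k <= m)%N -> dvdpi pi k e by apply.
elim=> [|[|k] IHk] le_km; [by exists e; rewrite expr0 scale1r | exact: f1 |].
have ek := IHk (ltnW le_km).
have := dvdpiB (dvdpiW le_km e_idem) (dvdpiW _ (dvdpiM ek ek)).
by rewrite addrK; apply; lia.
Qed.

End MultiplicativeModPi.

Section NewtonStep.
Variables (O : idomainType) (pi : O) (Lam : algType O) (n : nat) (b : 'I_n -> Lam).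
Hypotheses (b_basis : is_basis b) (pi_unif : dvr_uniformizer pi).
Variables (d : nat) (E : 'M[O]_n).
Hypothesis E_sep : sep_element b (pi ^+ d) E.
Variables (m : nat) (f : Lam -> Lam).
Hypotheses (f_lin : is_linear f) (f_mul : multiplicative_mod pi m f).
Implicit Types (x y z u v w : Lam).

Definition defect x y := divpi pi m (f x * f y - f (x * y)).
Local Notation c := defect.

Lemma defectE x y : f x * f y - f (x * y) = pi ^+ m *: c x y.
Proof. exact/divpiK/f_mul. Qed.

Let scale_inj := scale_piX_inj b_basis pi_unif (m := m).

Lemma is_linear_defectl y : is_linear (c^~ y).
Proof.
split=> [x x' | a x]; apply: scale_inj => /=.
  by rewrite scalerDr -!defectE mulrDl !(f_lin.1) mulrDl opprD addrACA.
by rewrite scalerA mulrC -scalerA -!defectE (f_lin.2) -!scalerAl (f_lin.2) scalerBr.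
Qed.

Lemma is_linear_defectr x : is_linear (c x).
Proof.
split=> [y y' | a y]; apply: scale_inj => /=.
  by rewrite scalerDr -!defectE mulrDr !(f_lin.1) mulrDr opprD addrACA.
by rewrite scalerA mulrC -scalerA -!defectE (f_lin.2) -!scalerAr (f_lin.2) scalerBr.
Qed.

Lemma defect_cocycle u v w : c u v * f w - c u (v * w) = f u * c v w - c (u * v) w.
Proof.
apply: scale_inj => /=; rewrite !scalerBr scalerAl scalerAr -!defectE.
by rewrite mulrBl mulrBr !mulrA subrACA.
Qed.

Definition newton_corr z := contract E (fun i j => f (b i) * c (b j) z).
Definition newton x := f x - pi ^+ (m - d) *: newton_corr x.
Local Notation g := newton_corr.

Lemma is_linear_newton_corr : is_linear g.
Proof.
split=> [z z' | a z]; rewrite /g -?contractD -?contractZ; apply: eq_contract => i j.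
  by rewrite (is_linear_defectr _).1 mulrDr.
by rewrite (is_linear_defectr _).2 scalerAr.
Qed.

Lemma is_linear_newton : is_linear newton.
Proof.
have [gD gZ] := is_linear_newton_corr.
split=> [x y | a x]; rewrite /newton.
  by rewrite (f_lin.1) gD scalerDr opprD addrACA.
by rewrite (f_lin.2) gZ scalerA mulrC -scalerA scalerBr.
Qed.

Lemma newton_congr x : congr pi (m - d) (newton x) (f x).
Proof. by rewrite /congr /newton addrAC subrr add0r; apply/dvdpiN/dvdpi_scale. Qed.

Hypotheses (f_map1 : congr pi 1 (f 1) 1) (m_gt : (2 * d < m)%N).

Lemma newton_map1 : congr pi 1 (newton 1) 1.
Proof. by apply: congr_trans f_map1; apply: congrW (newton_congr 1); lia. Qed.

(* By the balancedness of E and the cocycle identity, the left-hand side is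
   (\sum_(i, j) E i j f (b i) f (b j)) c x y, and that sum is f (pi^d) = pi^d mod pi^m. *)
Lemma newton_corr_defect x y :
  congr pi m (f x * g y + g x * f y - g (x * y)) (pi ^+ d *: c x y).
Proof.
have left_term : congr pi m (f x * g y) (contract E (fun i j => f (b i) * c (b j * x) y)).
  have linl v : is_linear (fun u => f u * c v y).
    by split=> [u u' | a u]; rewrite ?(f_lin.1) ?(f_lin.2) ?mulrDl ?scalerAl.
  have linr u : is_linear (fun v => f u * c v y).
    split=> [v v' | a v]; first by rewrite (is_linear_defectl _).1 mulrDr.
    by rewrite (is_linear_defectl _).2 scalerAr.
  rewrite /g -contractMl -(sep_element_balanced b_basis x E_sep linl linr).
  apply: congr_contract => i j.
  by rewrite mulrA; apply: congrM (f_mul _ _) (congr_refl _ _ _).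
have right_terms : g x * f y - g (x * y) =
    contract E (fun i j => f (b i) * f (b j) * c x y) -
    contract E (fun i j => f (b i) * c (b j * x) y).
  rewrite /g -contractMr -!contractB; apply: eq_contract => i j.
  by rewrite -!mulrA -!mulrBr defect_cocycle.
have unit_term : congr pi m (contract E (fun i j => f (b i) * f (b j))) (pi ^+ d *: 1).
  apply: (@congr_trans _ _ _ _ _ (contract E (fun i j => f (b i * b j)))).
    by apply: congr_contract => i j; apply: f_mul.
  rewrite -is_linear_contract //; have := E_sep.1; rewrite /mult => ->; rewrite (f_lin.2).
  by apply/congrZ/multiplicative_mod_map1 => //; lia.
rewrite -addrA right_terms addrCA.
apply: congr_trans (congrD (congr_refl _ _ _) (congrB left_term (congr_refl _ _ _))) _.
rewrite subrr addr0 contractMr; apply: congr_trans (congrM unit_term (congr_refl _ _ _)) _.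
by apply: congr_eq; rewrite -scalerAl mul1r.
Qed.

Lemma newton_mul : multiplicative_mod pi (2 * (m - d)) newton.
Proof.
move=> x y; rewrite /congr /newton mul_defect_perturb defectE.
have -> : pi ^+ m = pi ^+ (m - d) * pi ^+ d by rewrite -exprD subnK //; lia.
rewrite -scalerA -scalerBr; apply: dvdpiD.
  by apply: (@dvdpiW _ _ _ _ (m - d + m)); [lia | apply/dvdpiXZ/congr_sym/newton_corr_defect].
by apply: (@dvdpiW _ _ _ _ (m - d + (m - d))); [lia | apply/dvdpiXZ/dvdpi_scale].
Qed.

End NewtonStep.

Section NewtonLimit.
Variables (O : idomainType) (pi : O) (Lam : algType O) (n : nat) (b : 'I_n -> Lam).
Hypotheses (b_basis : is_basis b) (pi_unif : dvr_uniformizer pi) (O_complete : pi_complete pi).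
Variables (d : nat) (E : 'M[O]_n).
Hypothesis E_sep : sep_element b (pi ^+ d) E.
Variables (s : nat) (f0 : Lam -> Lam).
Hypotheses (le_ds : (d <= s)%N) (f0_lin : is_linear f0).
Hypotheses (f0_mul : multiplicative_mod pi (2 * s).+1 f0) (f0_map1 : congr pi 1 (f0 1) 1).

Fixpoint newton_exp k := if k is k'.+1 then (2 * (newton_exp k' - d))%N else (2 * s).+1.

Fixpoint newton_iter k :=
  if k is k'.+1 then newton pi b d E (newton_exp k') (newton_iter k') else f0.
Local Notation F := newton_iter.

Lemma newton_exp_gt k : (2 * d < newton_exp k)%N.
Proof. by elim: k => [|k IHk] /=; lia. Qed.

Lemma newton_exp_ge k : (k <= newton_exp k)%N.
Proof. by elim: k => [|k IHk] //=; have := newton_exp_gt k; lia. Qed.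

Lemma newton_exp_mono : {homo newton_exp : i j / (i <= j)%N}.
Proof.
apply: homo_leq => [//|j i k|k] /=; first exact: leq_trans.
by have := newton_exp_gt k; lia.
Qed.

Lemma newton_iter_spec k :
  [/\ is_linear (F k), multiplicative_mod pi (newton_exp k) (F k) & congr pi 1 (F k 1) 1].
Proof.
elim: k => [|k [F_lin F_mul F_map1]] //=; have exp_gt := newton_exp_gt k; split.
- exact: is_linear_newton.
- exact: newton_mul.
- exact: newton_map1.
Qed.

Lemma newton_iter_cauchy x i j : (i <= j)%N -> congr pi (newton_exp i - d) (F j x) (F i x).
Proof.
elim: j => [|j IHj]; first by rewrite leqn0 => /eqP ->; apply: congr_refl.
rewrite leq_eqVlt => /predU1P [-> | le_ij]; first exact: congr_refl.
apply: congr_trans (IHj le_ij); apply: congrW (newton_congr _ _ _ _ _ _ x).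
by have := newton_exp_mono (le_ij : (i <= j)%N); lia.
Qed.

Lemma newton_iter_congr0 k x : congr pi s.+1 (F k x) (f0 x).
Proof. by apply: congrW (newton_iter_cauchy x (leq0n k)) => /=; lia. Qed.

Lemma newton_iter_basis_cauchy j : pi_cauchy pi (F^~ (b j)).
Proof.
move=> N; have exp_ge := newton_exp_ge (N + d).
exists (N + d)%N => i i' le_i le_i'.
have Fi := newton_iter_cauchy (b j) le_i; have Fi' := newton_iter_cauchy (b j) le_i'.
apply: (@congr_trans _ _ _ _ _ (F (N + d) (b j))); last apply: congr_sym.
  by apply: congrW Fi; lia.
by apply: congrW Fi'; lia.
Qed.

Definition newton_lim_basis j := epsilon (inhabits 0) (pi_limit pi (F^~ (b j))).

Definition newton_lim x := \sum_j bcoord b x j *: newton_lim_basis j.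

Lemma newton_lim_basisP j : pi_limit pi (F^~ (b j)) (newton_lim_basis j).
Proof.
exact: epsilon_spec (free_pi_complete b_basis O_complete (newton_iter_basis_cauchy j)).
Qed.

Lemma newton_lim_congr x N k : (N + d <= k)%N -> congr pi N (newton_lim x) (F k x).
Proof.
move=> le_k; have [F_lin _ _] := newton_iter_spec k.
rewrite /congr (is_linear_bcoordE b_basis x F_lin) -sumrB.
apply: dvdpi_sum => j; rewrite -scalerBr; apply: dvdpiZ.
have [M lim_M] := newton_lim_basisP j N.
apply: congr_trans (lim_M _ (leq_maxl M k)) _.
apply: congrW (newton_iter_cauchy _ (leq_maxr M k)).
by have := newton_exp_ge k; lia.
Qed.

Lemma newton_lim_mul x y : newton_lim (x * y) = newton_lim x * newton_lim y.
Proof.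
apply: (congr_forall_eq b_basis pi_unif) => N; pose k := (N + d)%N.
have [_ F_mul _] := newton_iter_spec k; have exp_ge := newton_exp_ge k.
have lim_k z := newton_lim_congr z (leqnn k).
apply: congr_trans (lim_k _) (congr_sym _).
apply: congr_trans (congrM (lim_k x) (lim_k y)) _.
by apply: congrW (F_mul x y); lia.
Qed.

Lemma newton_lim1 : newton_lim 1 = 1.
Proof.
apply: (congr_forall_eq b_basis pi_unif) => N; pose k := (N + d)%N.
have [_ F_mul F_map1] := newton_iter_spec k; have exp_ge := newton_exp_ge k.
have F1 : congr pi (newton_exp k) (F k 1) 1.
  by apply: multiplicative_mod_map1 F_map1 F_mul; have := newton_exp_gt k; lia.
by apply: congr_trans (newton_lim_congr _ (leqnn k)) (congrW _ F1); lia.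
Qed.

Lemma newton_lim_congr0 x : congr pi s.+1 (newton_lim x) (f0 x).
Proof.
apply: congr_trans (newton_lim_congr x (leqnn (s.+1 + d))) _; exact: newton_iter_congr0.
Qed.

End NewtonLimit.

Section Bijectivity.
Variables (O : idomainType) (pi : O) (Lam : algType O) (n : nat) (b : 'I_n -> Lam).
Hypotheses (b_basis : is_basis b) (pi_unif : dvr_uniformizer pi).
Local Notation bcoord := (bcoord b).
Implicit Types (f : Lam -> Lam) (M N : 'M[O]_n).

Lemma det_pdvd_congr m M N :
  (forall i j, pdvd pi m (M i j - N i j)) -> pdvd pi m (\det M - \det N).
Proof.
pose R (u v : O) := pdvd pi m (u - v).
have R_refl u : R u u by exists 0; rewrite subrr mulr0.
have RD u v u' v' : R u v -> R u' v' -> R (u + u') (v + v').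
  by move=> [c e] [c' e']; exists (c + c'); rewrite opprD addrACA e e' mulrDr.
have RM u v u' v' : R u v -> R u' v' -> R (u * u') (v * v').
  move=> [c e] [c' e']; exists (c * u' + v * c').
  by rewrite mulrDr mulrA -e mulrCA -e' mulrBl mulrBr addrA subrK.
move=> RMN; apply: (big_ind2 R) => [|? ? ? ?|sigma _]; [exact: R_refl | exact: RD |].
apply: (RM); first exact: R_refl.
by apply: (big_ind2 R) => [|? ? ? ?|i _]; [exact: R_refl | exact: RM | exact: RMN].
Qed.

Definition lin_mx f : 'M[O]_n := \matrix_(i, j) bcoord (f (b j)) i.

Lemma bcoord_linear f x i : is_linear f -> bcoord (f x) i = \sum_j lin_mx f i j * bcoord x j.
Proof.
move=> f_lin; rewrite (is_linear_bcoordE b_basis x f_lin) (bcoord_sum b_basis).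
by apply: eq_bigr => j _; rewrite mxE mulrC.
Qed.

Lemma unitmx_surjective_mod_pi f : is_linear f ->
  (forall y, exists x, congr pi 1 (f x) y) -> lin_mx f \in unitmx.
Proof.
move=> f_lin f_surj; pose pre l := epsilon (inhabits 0) (fun x => congr pi 1 (f x) (b l)).
have preP l : congr pi 1 (f (pre l)) (b l).
  exact: (epsilon_spec _ (fun x => congr pi 1 (f x) (b l))).
pose X : 'M[O]_n := \matrix_(j, l) bcoord (pre l) j.
have AX_1 : pdvd pi 1 (\det (lin_mx f *m X) - \det (1%:M : 'M[O]_n)).
  apply: det_pdvd_congr => i l; rewrite !mxE.
  have -> : \sum_j lin_mx f i j * X j l = bcoord (f (pre l)) i.
    by rewrite (bcoord_linear _ _ f_lin); apply: eq_bigr => j _; rewrite /X mxE.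
  have /(dvdpi_bcoord b_basis) /(_ i) := preP l.
  by rewrite (bcoordB b_basis) (bcoord_basis b_basis).
rewrite det1 in AX_1; have := unit_of_pdvd_subr1 pi_unif AX_1.
by rewrite unitmxE det_mulmx unitrM => /andP [].
Qed.

Lemma bijective_unitmx f : is_linear f -> lin_mx f \in unitmx -> bijective f.
Proof.
move=> f_lin A_unit; pose col x : 'cV[O]_n := \col_j bcoord x j.
have col_f x : col (f x) = lin_mx f *m col x.
  apply/matrixP => i k; rewrite /col !mxE (bcoord_linear _ _ f_lin).
  by apply: eq_bigr => j _; rewrite !mxE.
have col_inj : injective col.
  move=> x y /matrixP eq_xy; apply: (bcoord_inj b_basis) => j.
  by have := eq_xy j 0; rewrite /col !mxE.
pose g y := \sum_j (invmx (lin_mx f) *m col y) j 0 *: b j.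
have col_g y : col (g y) = invmx (lin_mx f) *m col y.
  by apply/matrixP => j k; rewrite ord1 /col /g mxE (bcoord_comb b_basis).
by exists g => x; apply: col_inj; rewrite !(col_f, col_g) ?mulKmx ?mulKVmx.
Qed.

Lemma bijective_surjective_mod_pi f : is_linear f ->
  (forall y, exists x, congr pi 1 (f x) y) -> bijective f.
Proof. by move=> f_lin f_surj; apply/bijective_unitmx/unitmx_surjective_mod_pi. Qed.

End Bijectivity.

Lemma is_aut_mod_aut (O : idomainType) (pi : O) (Lam : algType O) m (alpha : Lam -> Lam) :
  is_aut alpha -> is_aut_mod pi m alpha.
Proof.
move=> [aD aZ aM a1 [g ag ga]]; have a_lin : is_linear alpha by [].
have gZ a z : g (a *: z) = a *: g z by rewrite -{1}(ga z) -aZ ag.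
split; first by move=> x y [z e]; exists (alpha z); rewrite -is_linearB // e aZ.
split; first by move=> x y; apply/congr_eq/aD.
split; first by move=> a x; apply/congr_eq/aZ.
split; first by move=> x y; apply/congr_eq/aM.
split; first exact/congr_eq.
split; first by move=> x y [z e]; exists (g z); rewrite -(ag (x - y)) is_linearB // e gZ.
by move=> y; exists (g y); apply/congr_eq/ga.
Qed.

Lemma is_aut_mod_bcoordE (O : idomainType) (pi : O) (Lam : algType O) (n : nat)
  (b : 'I_n -> Lam) (b_basis : is_basis b) m (psi : Lam -> Lam) x :
  is_aut_mod pi m psi -> congr pi m (psi x) (\sum_j bcoord b x j *: psi (b j)).
Proof.
move=> [_ [psiD [psiZ _]]]; rewrite {1}(bcoordK b_basis x).
apply: (big_ind2 (fun u v => congr pi m (psi u) v)) => [|u v u' v' psi_u psi_u'|j _].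
- by have := dvdpiN (psiD 0 0); rewrite addr0 opprB addrK /congr subr0.
- exact: congr_trans (psiD u u') (congrD psi_u psi_u').
- exact: psiZ.
Qed.

Section LiftAutomorphism.
Variables (O : idomainType) (pi : O) (Lam : algType O) (n : nat) (b : 'I_n -> Lam).
Hypotheses (b_basis : is_basis b) (pi_unif : dvr_uniformizer pi) (O_complete : pi_complete pi).
Variables (d : nat) (E : 'M[O]_n) (s : nat).
Hypotheses (E_sep : sep_element b (pi ^+ d) E) (le_ds : (d <= s)%N).

Lemma lift_aut_mod (psi : Lam -> Lam) : is_aut_mod pi (2 * s).+1 psi ->
  exists alpha, is_aut alpha /\ forall x, congr pi s.+1 (alpha x) (psi x).
Proof.
move=> psi_aut; have [_ [_ [_ [psiM [psi1 [_ psi_surj]]]]]] := psi_aut.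
pose f0 x := \sum_j bcoord b x j *: psi (b j).
have f0_lin : is_linear f0 := is_linear_comb b_basis _.
have f0_psi x : congr pi (2 * s).+1 (f0 x) (psi x).
  exact/congr_sym/(is_aut_mod_bcoordE b_basis).
have f0_mul : multiplicative_mod pi (2 * s).+1 f0.
  move=> x y; apply: (congr_trans (congrM (f0_psi x) (f0_psi y))).
  exact: congr_trans (congr_sym (psiM x y)) (congr_sym (f0_psi _)).
have f0_map1 : congr pi 1 (f0 1) 1 by apply: congrW (congr_trans (f0_psi 1) psi1).
pose alpha := newton_lim pi b d E s f0.
have alpha_lin : is_linear alpha := is_linear_comb b_basis _.
have alpha_psi x : congr pi s.+1 (alpha x) (psi x).
  have := newton_lim_congr0 b_basis pi_unif O_complete E_sep le_ds f0_lin f0_mul f0_map1 x.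
  by move/congr_trans; apply; apply: congrW (f0_psi x); lia.
exists alpha; split=> //; split; [exact: alpha_lin.1 | exact: alpha_lin.2 | | |].
- exact: newton_lim_mul.
- exact: newton_lim1.
- apply: (bijective_surjective_mod_pi b_basis pi_unif alpha_lin) => y.
  have [x psi_x] := psi_surj y; exists x.
  have le_s : (s.+1 <= (2 * s).+1)%N by lia.
  exact: congrW _ (congr_trans (alpha_psi x) (congrW le_s psi_x)).
Qed.

End LiftAutomorphism.

Unset Implicit Arguments.

Theorem lemma3p4 (p : nat) (O : idomainType) (pi : O) (Lam : algType O)
  (d s : nat) :
  pmodular_system p pi -> pi_complete pi -> is_order Lam ->
  is_depth pi Lam d -> (d <= s)%N ->
  forall phi : Lam -> Lam, is_aut_mod pi s.+1 phi ->
    (exists alpha : Lam -> Lam,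
        is_aut alpha /\ forall x, congr pi s.+1 (alpha x) (phi x)) <->
    (exists psi : Lam -> Lam,
        is_aut_mod pi (2 * s).+1 psi /\ forall x, congr pi s.+1 (psi x) (phi x)).
Proof.
move=> [pi_unif _ _ _] O_complete [n [b [b_basis _]]] depth le_ds phi _.
have [E E_sep] : exists E, sep_element b (pi ^+ d) E.
  by apply: (sep_element_of_annihilator b_basis); apply/depth; exists 1; rewrite mulr1.
split=> [[alpha [alpha_aut alpha_phi]] | [psi [psi_aut psi_phi]]].
  by exists alpha; split=> //; apply: is_aut_mod_aut.
have [alpha [alpha_aut alpha_psi]] := lift_aut_mod b_basis pi_unif O_complete E_sep le_ds psi_aut.
by exists alpha; split=> // x; apply: congr_trans (alpha_psi x) (psi_phi x).
Qed.
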